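(* Let $G$ be a finite group with a non-abelian Hall $\pi$-subgroup $H$. If every element of $H\setminus Z(H)$ has $G$-conjugacy class size a $\pi$-number, then $G$ is $\pi$-decomposable.
   Context: $\pi$ is a set of primes; a group is $\pi$-decomposable if $G=O_\pi(G)\times O_{\pi'}(G)$; class size of $x$ is $|G:C_G(x)|$. *)

From mathcomp Require Import all_boot all_fingroup all_solvable.
Set Implicit Arguments.
Unset Strict Implicit.
Unset Printing Implicit Defensive.
Import GroupScope.

Definition pi_decomposable (gT : finGroupType) (pi : nat_pred) (G : {set gT}) :=
  'O_pi(G) \x 'O_pi^'(G) = G.

(* Since #|G : 'C_G[x]| is a pi-number and #|G : H| a pi'-number,
   'C_G[x] * H = G, so every noncentral x of H has the same G-class as H-class.
   The noncentral elements generate H, hence H is normal and, by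
   Schur-Zassenhaus, has a complement K. A pi'-element g acts coprimely on H
   and fixes all noncentral classes, so by Glauberman's lemma each of them meets
   'C_H[g]; as a group is never the union of the conjugates of a proper
   subgroup, H = 'C_H[g] * 'Z(H). Then g moves each z in 'Z(H) to w * z with
   w fixed by g, and coprimality forces w = 1. Thus K centralizes H and
   G = H \x K. *)

From mathcomp Require Import all_boot all_fingroup all_solvable.
Set Implicit Arguments. Unset Strict Implicit. Unset Printing Implicit Defensive.
Import GroupScope.

Lemma cent1_conjgP (gT : finGroupType) (x y : gT) :
  reflect (x ^ y = x) (y \in 'C[x]).
Proof.
by rewrite cent1C; apply: (iffP cent1P) => [/commgP/conjg_fixP | /conjg_fixP/commgP].
Qed.

Lemma class_support_eqG (gT : finGroupType) (D H : {group gT}) :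
  D \subset H -> H \subset class_support D H -> D :=: H.
Proof.
move=> sDH sHDH; apply: index1g (sDH) _.
have le_cover : #|cover (D^# :^: H)| <= #|H : D| * #|D^#|.
  apply: leq_trans (leq_card_cover _) _.
  rewrite (eq_bigr (fun _ => #|D^#|)) => [|_ /imsetP[y _ ->]]; last exact: cardJg.
  rewrite sum_nat_const leq_mul2r card_conjugates normD1 dvdn_leq ?orbT //.
  by rewrite indexgS // subsetI sDH normG.
have le_support : #|class_support D H| <= 1 + #|H : D| * #|D^#|.
  by rewrite (cardsD1 1) class_supportD1 leq_add ?leq_b1.
have := leq_trans (subset_leq_card sHDH) le_support.
rewrite -(Lagrange sDH) (cardsD1 1 D) group1 mulnDl mul1n mulnC leq_add2r => le_i1.
by apply/eqP; rewrite eqn_leq le_i1 indexg_gt0.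
Qed.

Lemma gen_noncentral (gT : finGroupType) (H : {group gT}) :
  ~~ abelian H -> <<H :\: 'Z(H)>> = H.
Proof.
move=> nabH; apply/eqP; rewrite eqEsubset gen_subG subsetDl /=.
have [y Hy nZy] : exists2 y, y \in H & y \notin 'Z(H).
  by apply/subsetPn; apply: contra nabH => sHZ; apply: abelianS sHZ (center_abelian H).
have Sy : y \in H :\: 'Z(H) by rewrite inE nZy.
apply/subsetP=> x Hx; have [Zx | nZx] := boolP (x \in 'Z(H)); last first.
  by rewrite mem_gen // inE nZx.
rewrite -(mulKVg y x) groupM ?mem_gen // in_setD (groupM (groupVr Hy) Hx) andbT.
apply: contra nZy => Zyx; have -> : y = x * (y^-1 * x)^-1.
  by rewrite invMg invgK mulKVg.
by rewrite groupM ?groupV.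
Qed.

(* Glauberman's lemma for conjugacy classes; solvability of A replaces the
   Odd Order Theorem in the conjugacy part of Schur-Zassenhaus. *)
Lemma sol_coprime_class_cent (gT : finGroupType) (A H : {group gT}) x :
    solvable A -> A \subset 'N(H) -> coprime #|H| #|A| ->
    {in A, forall a, x ^ a \in x ^: H} ->
  exists2 h, h \in H & A \subset 'C[x ^ h].
Proof.
move=> solA nHA coHA stabA; pose M := (A <*> H)%G; pose C := 'C_M[x]%G.
have [sAM sHM] := (joing_subl A H, joing_subr A H).
have defAH : M :=: A * H := norm_joinEl nHA.
have sACH : A \subset C * H.
  apply/subsetP=> a Aa; have /imsetP[h Hh xah] := stabA a Aa.
  have [Ma Mh] := (subsetP sAM a Aa, subsetP sHM h Hh).
  rewrite -(mulgKV h a) mem_mulg // in_setI groupM ?groupV //=.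
  by apply/cent1_conjgP; rewrite conjgM xah conjgK.
have defCH : C * H = M.
  apply/eqP; rewrite eqEsubset mul_subG ?subsetIl //= {1}defAH.
  by apply: subset_trans (mulSg H sACH) _; rewrite -mulgA mulGid.
have oC : #|C| = (#|A| * #|C :&: H|)%N.
  apply/eqP; rewrite -(eqn_pmul2r (cardG_gt0 H)) mul_cardG defCH defAH.
  by rewrite coprime_cardMg 1?coprime_sym // mulnAC.
have hallCH : Hall C (C :&: H).
  rewrite /Hall subsetIl -divgS ?subsetIl //= oC mulnK ?cardG_gt0 //.
  exact: coprimeSg (subsetIr C H) coHA.
have nHC : C \subset 'N(H).
  by rewrite (subset_trans (subsetIl M _)) // join_subG nHA normG.
have nsCH_C : C :&: H <| C := norm_normalI nHC.
have [B /complP[tiB defB]] := splitsP (SchurZassenhaus_split hallCH nsCH_C).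
have sBC : B \subset C by rewrite -defB mulG_subr.
have oB : #|A| = #|B|.
  have := TI_cardMg tiB; rewrite defB oC => oCHB.
  by apply/eqP; rewrite -(eqn_pmul2l (cardG_gt0 (C :&: H)%G)) mulnC oCHB.
have sBM : B \subset M := subset_trans sBC (subsetIl M _).
(* B, like A, is a complement to H in M, so it is an H-conjugate of A. *)
have [h Hh defBh] := SchurZassenhaus_trans_actsol solA nHA sBM coHA oB.
exists h^-1; first by rewrite groupV.
by rewrite cent1J -sub_conjg -defBh (subset_trans sBC) ?subsetIr.
Qed.

Lemma conjg_translation_coprime (gT : finGroupType) (g z w : gT) :
  coprime #[w] #[g] -> w ^ g = w -> z ^ g = w * z -> w = 1.
Proof.
move=> co_wg wg zg.
have zgn n : z ^ (g ^+ n) = w ^+ n * z.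
  elim: n => [|n IHn]; first by rewrite conjg1 mul1g.
  by rewrite expgSr conjgM IHn conjMg conjXg wg zg mulgA -expgSr.
have w_dv_g : #[w] %| #[g].
  by rewrite order_dvdn; apply/eqP/(mulIg z); rewrite mul1g -zgn expg_order conjg1.
apply/eqP; rewrite -order_eq1 -dvdn1 -(eqP co_wg).
by rewrite dvdn_gcd dvdnn.
Qed.

Section NonabelianHallSubgroup.

Variables (gT : finGroupType) (pi : nat_pred) (G H : {group gT}).
Hypotheses (hallH : pi.-Hall(G) H) (nabH : ~~ abelian H).
Hypothesis piClassH : forall x, x \in H :\: 'Z(H) -> pi.-nat #|G : 'C_G[x]|.

Lemma Hall_class_sub x g : x \in H :\: 'Z(H) -> g \in G -> x ^ g \in x ^: H.
Proof.
move=> Sx Gg; have [sHG _ pi'iGH] := and3P hallH.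
have defG : 'C_G[x] * H = G.
  exact: coprime_index_mulG (subsetIl G _) sHG (pnat_coprime (piClassH Sx) pi'iGH).
rewrite -defG in Gg; have [c h /setIP[_ /cent1_conjgP xc] Hh ->] := mulsgP Gg.
by rewrite conjgM xc memJ_class.
Qed.

Lemma Hall_normal : H <| G.
Proof.
rewrite /normal (pHall_sub hallH); apply/normsP=> g Gg; apply/eqP.
rewrite eqEcard cardJg leqnn andbT -{1}(gen_noncentral nabH) -genJ gen_subG.
apply/subsetP=> _ /imsetP[x Sx ->]; have /setDP[Hx _] := Sx.
exact: (subsetP (class_subG Hx (subxx H))) _ (Hall_class_sub Sx Gg).
Qed.

Lemma p'elt_subcent_center_mul g :
  g \in G -> pi^'.-elt g -> 'C_H[g] * 'Z(H) = H.
Proof.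
move=> Gg p'g; have piH := pHall_pgroup hallH.
have nHg : <[g]> \subset 'N(H).
  by rewrite cycle_subG (subsetP (normal_norm Hall_normal)).
have cZC : 'Z(H) \subset 'C('C_H[g]).
  by rewrite centsC (subset_trans (subsetIl H _)) // centsC subsetIr.
rewrite -cent_joinEr //; apply: class_support_eqG.
  by rewrite join_subG subsetIl center_sub.
apply/subsetP=> x Hx; have [Zx | nZx] := boolP (x \in 'Z(H)).
  by rewrite -(conjg1 x) memJ_class_support ?(subsetP (joing_subr _ _)).
have Sx : x \in H :\: 'Z(H) by rewrite in_setD nZx.
have sgG : <[g]> \subset G by rewrite cycle_subG.
have [h Hh] := sol_coprime_class_cent (abelian_sol (cycle_abelian g)) nHg
  (pnat_coprime piH p'g) (fun a ga => Hall_class_sub Sx (subsetP sgG a ga)).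
rewrite cycle_subG cent1C => cxhg.
rewrite -(conjgK h x) memJ_class_support ?groupV // (subsetP (joing_subl _ _)) //.
by rewrite in_setI groupJ.
Qed.

Lemma p'elt_cent_center g : g \in G -> pi^'.-elt g -> 'Z(H) \subset 'C[g].
Proof.
move=> Gg p'g; have piH := pHall_pgroup hallH.
have defH := p'elt_subcent_center_mul Gg p'g.
have [x0 Cx0 nZx0] : exists2 x0, x0 \in 'C_H[g] & x0 \notin 'Z(H).
  apply/subsetPn; apply: contra nabH => sCZ.
  by rewrite -defH mulSGid ?center_abelian.
have /setIP[Hx0 cx0g] := Cx0.
have x0g : x0 ^ g = x0 by apply/cent1_conjgP; rewrite cent1C.
have centZ u z : u \in H -> z \in 'Z(H) -> u ^ z = u /\ z ^ u = z.
  move=> Hu Zz; have cuz := centerC Hu Zz.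
  by split; apply/cent1_conjgP/cent1P; last exact: commute_sym.
apply/subsetP=> z Zz; rewrite cent1C; apply/cent1_conjgP.
have Hz : z \in H := subsetP (center_sub H) z Zz.
have Sx0z : x0 * z \in H :\: 'Z(H).
  rewrite in_setD (groupM Hx0 Hz) andbT; apply: contra nZx0 => Zx0z.
  by rewrite -(mulgK z x0) groupM ?groupV.
(* (x0 * z) ^ g = x0 * z ^ g is an H-conjugate of x0 * z, which makes z ^ g a
   left translate of z by an element of 'C_H[g]. *)
have /imsetP[h] := Hall_class_sub Sx0z Gg; rewrite -defH.
case/mulsgP=> c z' Cc Zz' -> {h}; have /setIP[Hc _] := Cc.
rewrite conjMg x0g conjgM (conjMg x0 z c) (centZ c z Hc Zz).2.
rewrite (centZ _ z' _ Zz').1; last by rewrite groupM ?groupJ.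
set w := x0^-1 * x0 ^ c => x0zg.
have Cw : w \in 'C_H[g] by rewrite groupM ?groupV ?groupJ.
have zg : z ^ g = w * z by rewrite /w -mulgA -x0zg mulKg.
have /setIP[Hw cwg] := Cw.
have wg : w ^ g = w by apply/cent1_conjgP; rewrite cent1C.
have co_wg : coprime #[w] #[g] := pnat_coprime (mem_p_elt piH Hw) p'g.
by rewrite zg (conjg_translation_coprime co_wg wg zg) mul1g.
Qed.

Lemma p'elt_cent_Hall g : g \in G -> pi^'.-elt g -> H \subset 'C[g].
Proof.
move=> Gg p'g; rewrite -(p'elt_subcent_center_mul Gg p'g).
by rewrite mul_subG ?subsetIr ?p'elt_cent_center.
Qed.

End NonabelianHallSubgroup.

Theorem mainTheorem8 (gT : finGroupType) (pi : nat_pred) (G H : {group gT}) :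
  pi.-Hall(G) H -> ~~ abelian H ->
  (forall x, x \in H :\: 'Z(H) -> pi.-nat #|G : 'C_G[x]|) ->
  pi_decomposable pi G.
Proof.
move=> hallH nabH piClassH; have nsHG := Hall_normal hallH nabH piClassH.
have [K /complP[tiHK defG]] :=
  splitsP (SchurZassenhaus_split (pHall_Hall hallH) nsHG).
have hallK : pi^'.-Hall(G) K by rewrite -(compl_pHall _ hallH); apply/complP.
have sKG := pHall_sub hallK.
have cHK : K \subset 'C(H).
  apply/subsetP=> k Kk; rewrite -sub_cent1.
  apply: (p'elt_cent_Hall hallH nabH piClassH); first exact: subsetP sKG k Kk.
  exact: mem_p_elt (pHall_pgroup hallK) Kk.
have nsKG : K <| G by rewrite /normal sKG -defG mul_subG ?normG ?cents_norm // centsC.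
rewrite /pi_decomposable (normal_Hall_pcore hallH nsHG) (normal_Hall_pcore hallK nsKG).
by rewrite dprodE.
Qed.
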